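(* There exists a structure $\langle M,\mathsf{S}\rangle$, with $M$ a set and $\mathsf{S}\subseteq M\times\mathcal{P}(M)$, that satisfies (S1), (S2), (S3), (S4), the condition ($\mathrm{S}\Sigma$): ''for every $x\in M$ and every non-empty family $\mathcal{A}$ of subsets of $M$ with $x\,\mathsf{S}\,A$ for all $A\in\mathcal{A}$, one has $x\,\mathsf{S}\,\bigcup\mathcal{A}$'', and the condition ''for all $x,y\in M$, $x\,\mathsf{S}\,\{y\}$ implies $x=y$'', but does not satisfy (S5).
   Context: For a set $M$ and a relation $\mathsf{S}\subseteq M\times\mathcal{P}(M)$ define: $x\sqsubseteq_{\mathsf{S}} y$ iff there is $X\subseteq M$ with $y\,\mathsf{S}\,X$ and $x\in X$; $\mathrm{I}(x)=\{y\in M\mid y\sqsubseteq_{\mathsf{S}} x\}$ and for $A\subseteq M$, $\mathrm{I}(A)=\bigcup_{a\in A}\mathrm{I}(a)$; $x$ s-overlaps $y$ iff there are $X,Y\subseteq M$ with $x\,\mathsf{S}\,X$, $y\,\mathsf{S}\,Y$, $X\cap Y\neq\emptyset$; a set $A\subseteq M$ is pre-dense in $B\subseteq M$ iff for every $b\in B$ there is $a\in A$ such that $a$ s-overlaps $b$. Axioms: (S1) for every non-empty $X\subseteq M$ there is $x\in M$ with $x\,\mathsf{S}\,X$; (S2) $x\,\mathsf{S}\,X\wedge y\,\mathsf{S}\,X\to x=y$; (S3) $x\,\mathsf{S}\,X\wedge y\,\mathsf{S}\,Y\wedge x\in Y\to y\,\mathsf{S}\,(X\cup Y)$; (S4) if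 $x\,\mathsf{S}\,X$, $x\,\mathsf{S}\,Y$ and $y\in Y$, then there are $z\in X$ and $Z,U\subseteq M$ with $z\,\mathsf{S}\,Z$, $y\,\mathsf{S}\,U$ and $Z\cap U\neq\emptyset$; (S5) for all $x\in M$ and $X\subseteq M$: if $X$ is pre-dense in $\mathrm{I}(x)$ then $x\,\mathsf{S}\,(\mathrm{I}(x)\cap\mathrm{I}(X))$. *)

(* Subsets of M are predicates M -> Prop; S : M -> (M -> Prop) -> Prop
   is the relation S ⊆ M × P(M). *)

Section SDefs.
Context {M : Type} (S : M -> (M -> Prop) -> Prop).

Definition sle (x y : M) : Prop := exists X : M -> Prop, S y X /\ X x.

Definition Iof (x : M) : M -> Prop := fun y => sle y x.

Definition IofSet (A : M -> Prop) : M -> Prop := fun y => exists a, A a /\ Iof a y.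

Definition soverlaps (x y : M) : Prop :=
  exists X Y : M -> Prop, S x X /\ S y Y /\ exists z, X z /\ Y z.

Definition predense (A B : M -> Prop) : Prop :=
  forall b, B b -> exists a, A a /\ soverlaps a b.

Definition S1 : Prop := forall X : M -> Prop, (exists z, X z) -> exists x, S x X.
Definition S2 : Prop := forall (x y : M) (X : M -> Prop), S x X -> S y X -> x = y.
Definition S3 : Prop := forall (x y : M) (X Y : M -> Prop),
  S x X -> S y Y -> Y x -> S y (fun z => X z \/ Y z).
Definition S4 : Prop := forall (x y : M) (X Y : M -> Prop),
  S x X -> S x Y -> Y y ->
  exists z, X z /\ exists Z U : M -> Prop, S z Z /\ S y U /\ exists w, Z w /\ U w.
Definition S5 : Prop := forall (x : M) (X : M -> Prop),
  predense X (Iof x) -> S x (fun z => Iof x z /\ IofSet X z).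

Definition SSigma : Prop := forall (x : M) (F : (M -> Prop) -> Prop),
  (exists A, F A) -> (forall A, F A -> S x A) ->
  S x (fun z => exists A, F A /\ A z).

Definition SSingleton : Prop := forall x y : M, S x (fun z => z = y) -> x = y.

End SDefs.

From Stdlib Require Import Bool Classical.

(* The counter-model lives on M = bool: a non-empty set X is "summed" by the
   boolean recording whether X contains true, i.e. x S X iff X is non-empty
   and (x = true <-> true ∈ X).  Since S is the graph of a function on
   non-empty sets, (S1), (S2) and the singleton condition are immediate, and
   (S3) and (SΣ) follow because membership of true in a union is decided by
   the members.  Every two points s-overlap, because {false, z} is summed by
   z; this gives (S4) at once.  (S5) fails at x = true with X = {false}: X is
   pre-dense in I(true) since all points overlap, but I(X) = I(false) = {false}
   and {false} is summed by false, not true. *)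

Definition contains_true (x : bool) (X : bool -> Prop) : Prop :=
  (exists z, X z) /\ (x = true <-> X true).

Lemma contains_true_S2 : S2 contains_true.
Proof.
  intros x y X [_ Hx] [_ Hy].
  apply eq_iff_eq_true. rewrite Hx, Hy. reflexivity.
Qed.

Lemma contains_true_S1 : S1 contains_true.
Proof.
  intros X HX. destruct (classic (X true)) as [Ht | Hf].
  - exists true. split; [exact HX | tauto].
  - exists false. split; [exact HX |]. split; [discriminate | tauto].
Qed.

Lemma contains_true_singleton : SSingleton contains_true.
Proof.
  intros x y [_ H]. apply eq_iff_eq_true. rewrite H.
  split; intro E; symmetry; exact E.
Qed.

(* If x S X, y S Y and x ∈ Y, then true ∈ X already forces true ∈ Y. *)
Lemma contains_true_S3 : S3 contains_true.
Proof.
  intros x y X Y [_ Hx] [[z Hz] Hy] HYx. split.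
  - exists z. right. exact Hz.
  - rewrite Hy. split; [intro; right; assumption |].
    intros [HX | HY]; [| exact HY].
    apply Hx in HX. subst x. exact HYx.
Qed.

(* A union of sets all summed by x contains true iff each of them does. *)
Lemma contains_true_SSigma : SSigma contains_true.
Proof.
  intros x F [A HA] HF. split.
  - destruct (HF A HA) as [[z Hz] _]. exists z, A. split; assumption.
  - split.
    + intro E. exists A. split; [exact HA |]. apply (HF A HA). exact E.
    + intros [B [HB HBt]]. apply (HF B HB). exact HBt.
Qed.

Lemma contains_true_pair (z : bool) :
  contains_true z (fun w => w = false \/ w = z).
Proof.
  split; [exists false; left; reflexivity |].
  split; [intro E; right; symmetry; exact E |].
  intros [E | E]; [discriminate | symmetry; exact E].
Qed.

(* Any two points s-overlap: their pairs with false share the point false. *)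
Lemma contains_true_overlap (x y : bool) : soverlaps contains_true x y.
Proof.
  exists (fun w => w = false \/ w = x), (fun w => w = false \/ w = y).
  split; [apply contains_true_pair |].
  split; [apply contains_true_pair |].
  exists false. split; left; reflexivity.
Qed.

Lemma contains_true_S4 : S4 contains_true.
Proof.
  intros x y X Y [[z Hz] _] _ _.
  exists z. split; [exact Hz |].
  exact (contains_true_overlap z y).
Qed.

(* Only false lies below false: the sets summed by false omit true. *)
Lemma Iof_false (y : bool) : Iof contains_true false y -> y = false.
Proof.
  intros [X [[_ HX] Hy]].
  destruct y; [| reflexivity].
  apply HX in Hy. discriminate.
Qed.

Lemma contains_true_not_S5 : ~ S5 contains_true.
Proof.
  intro HS5.
  assert (Hdense : predense contains_true (fun z => z = false)
                     (Iof contains_true true)).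
  { intros b _. exists false. split; [reflexivity | apply contains_true_overlap]. }
  destruct (HS5 true _ Hdense) as [_ [Htrue _]].
  destruct (Htrue eq_refl) as [_ [a [Ha Hbelow]]].
  subst a. discriminate (Iof_false true Hbelow).
Qed.

Theorem mainTheorem11 :
  exists (M : Type) (S : M -> (M -> Prop) -> Prop),
    S1 S /\ S2 S /\ S3 S /\ S4 S /\ SSigma S /\ SSingleton S /\ ~ S5 S.
Proof.
  exists bool, contains_true.
  exact (conj contains_true_S1 (conj contains_true_S2 (conj contains_true_S3
    (conj contains_true_S4 (conj contains_true_SSigma
    (conj contains_true_singleton contains_true_not_S5)))))).
Qed.
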